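(* There exists an integer $\mathsf{N}\ge 1$ such that $SAW_2(\mathsf{N})\neq SAW_3(\mathsf{N})$; that is, there is a path without crossing $c\in(\mathbb{Z}/4\mathbb{Z})^{\mathsf{N}}$ that cannot be reached from $(0,0,\dots,0)$ by a finite sequence of pivot moves all of whose intermediate conformations are paths without crossing.
   Context: A conformation of $\mathsf{N}+1$ residues is a vector $C=(C_1,\dots,C_{\mathsf{N}})\in(\mathbb{Z}/4\mathbb{Z})^{\mathsf{N}}$ (absolute encoding: $0$ = east, $1$ = south, $2$ = west, $3$ = north). Its lattice representation is $p(C)=(X_0,\dots,X_{\mathsf{N}})$ with $X_0=(0,0)$ and $X_{i}=X_{i-1}+(1,0),(0,-1),(-1,0),(0,1)$ according as $C_i=0,1,2,3$. $C$ is a path without crossing if the points $X_0,\dots,X_{\mathsf{N}}$ are pairwise distinct. $SAW_1(\mathsf{N})$ is the set of paths without crossing in $(\mathbb{Z}/4\mathbb{Z})^{\mathsf{N}}$. Let $f(x)=x+1 \pmod 4$. For $k\in\{-\mathsf{N},\dots,\mathsf{N}\}$ the pivot move $f_k$ is the identity if $k=0$, and otherwise $f_k(C_1,\dots,C_{\mathsf{N}})=(C_1,\dots,C_{|k|-1},f^{\operatorname{sign}(k)}(C_{|k|}),\dots,f^{\operatorname{sign}(k)}(C_{\mathsf{N}}))$. $SAW_2(\mathsf{N})$ is the set of $c\in SAW_1(\mathsf{N})$ for which there is a finite sequence $k_1,\dots,k_n\in\{-\mathsf{N},\dots,\mathsf{N}\}$ with $c=f_{k_n}\circ\cdots\circ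 f_{k_1}(0,\dots,0)$. $SAW_3(\mathsf{N})$ is the set of $c\in SAW_1(\mathsf{N})$ for which there is such a sequence with, in addition, every intermediate conformation $f_{k_j}\circ\cdots\circ f_{k_1}(0,\dots,0)$, $1\le j\le n$, lying in $SAW_1(\mathsf{N})$. *)

From HB Require Import structures.
From mathcomp Require Import all_boot all_order all_algebra.
Set Implicit Arguments. Unset Strict Implicit. Unset Printing Implicit Defensive.
Import Order.TTheory GRing.Theory Num.Theory.
Local Open Scope ring_scope.

(* A conformation of N+1 residues: a sequence of N elements of Z/4Z
   (absolute encoding 0 = east, 1 = south, 2 = west, 3 = north). *)
Definition conformation := seq 'Z_4.

Definition step (d : 'Z_4) : int * int :=
  match val d with
  | 0%N => (1, 0)
  | 1%N => (0, -1)
  | 2%N => (-1, 0)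
  | _ => (0, 1)
  end.

Definition addp (p q : int * int) : int * int := (p.1 + q.1, p.2 + q.2).

Definition point (C : conformation) (i : nat) : int * int :=
  foldr addp (0, 0) [seq step d | d <- take i C].

Definition lattice_rep (C : conformation) : seq (int * int) :=
  [seq point C i | i <- iota 0 (size C).+1].

Definition SAW1 (N : nat) (C : conformation) : Prop :=
  size C = N /\ uniq (lattice_rep C).

Definition fpow_sign (k : int) (x : 'Z_4) : 'Z_4 :=
  if 0 < k then x + 1 else x - 1.

(* Pivot move f_k: identity if k = 0; otherwise entries C_{|k|}, ..., C_N
   (1-indexed), i.e. 0-indexed positions j with |k| <= j+1, get f^{sign k}. *)
Definition pivot (k : int) (C : conformation) : conformation :=
  if k == 0 then C
  else [seq (if (j.+1 < `|k|)%N then nth 0 C j else fpow_sign k (nth 0 C j))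
       | j <- iota 0 (size C)].

Definition apply_pivots (ks : seq int) (C : conformation) : conformation :=
  foldl (fun D k => pivot k D) C ks.

Definition zero_conf (N : nat) : conformation := nseq N 0.

Definition valid_index (N : nat) (k : int) : bool := (`|k| <= N)%N.

Definition SAW2 (N : nat) (c : conformation) : Prop :=
  SAW1 N c /\
  exists ks : seq int, all (valid_index N) ks /\ c = apply_pivots ks (zero_conf N).

Definition SAW3 (N : nat) (c : conformation) : Prop :=
  SAW1 N c /\
  exists ks : seq int, all (valid_index N) ks /\ c = apply_pivots ks (zero_conf N) /\
    (forall j : nat, (1 <= j <= size ks)%N ->
       SAW1 N (apply_pivots (take j ks) (zero_conf N))).

From HB Require Import structures.
From mathcomp Require Import all_boot all_order all_algebra zify.
Set Implicit Arguments. Unset Strict Implicit. Unset Printing Implicit Defensive.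
Import Order.TTheory GRing.Theory Num.Theory.
Local Open Scope ring_scope.

(* We exhibit a self-avoiding conformation w of 216 residues that is built
   from the straight conformation (0, ..., 0) by pivot moves (so w is in
   SAW_2) and that is rigid: every pivot f_k with 2 <= |k| <= N applied to w
   creates a crossing.  The moves f_1 and f_{-1} rotate the whole chain by a
   quarter turn; they commute with all pivots and preserve self-avoidance, so
   every conformation in the rotation orbit of w is rigid as well.  Running a
   self-avoiding chain of pivot moves from (0, ..., 0) backwards, one sees
   that it can never enter this orbit: a self-avoiding predecessor of a rigid
   conformation E is f_{-1}(E) or f_1(E).  Since the orbit of the
   non-constant w does not contain the constant (0, ..., 0), w is not in
   SAW_3. *)

(* The lattice representation is the sequence of partial sums of the steps;
   [walk] computes it in linear time, which makes self-avoidance checkable. *)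
Definition walk (C : conformation) : seq (int * int) :=
  (0, 0) :: scanl addp (0, 0) [seq step d | d <- C].

Lemma foldl_addp (p : int * int) (s : seq (int * int)) :
  foldl addp p s = addp p (foldr addp (0, 0) s).
Proof.
elim: s p => [|q s IH] p /=; first by case: p => x y; rewrite /addp /= !addr0.
by rewrite IH /addp /= !addrA.
Qed.

Lemma lattice_repE (C : conformation) : lattice_rep C = walk C.
Proof.
apply: (@eq_from_nth _ (0, 0)).
  by rewrite /lattice_rep /walk size_map size_iota /= size_scanl size_map.
rewrite /lattice_rep size_map size_iota => i ltiC.
rewrite (nth_map 0%N) ?size_iota // nth_iota // add0n /point.
case: i ltiC => [|i] ltiC; first by rewrite take0.
rewrite /walk /= nth_scanl ?size_map // foldl_addp -map_take.
by case: (foldr _ _ _) => x y; rewrite /addp /= !add0r.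
Qed.

Definition self_avoiding (N : nat) (C : conformation) : bool :=
  (size C == N) && uniq (walk C).

Lemma self_avoidingP N C : reflect (SAW1 N C) (self_avoiding N C).
Proof.
rewrite /self_avoiding /SAW1 lattice_repE.
by apply: (iffP andP) => -[/eqP szC uC].
Qed.

Lemma scanl_straight (m n : nat) :
  scanl addp (Posz m, 0) (nseq n (1, 0)) = [seq (Posz i, 0) | i <- iota m.+1 n].
Proof.
elim: n m => [|n IH] m //=.
have -> : addp (Posz m, 0) (1, 0) = (Posz m.+1, 0).
  by rewrite /addp /= addr0 -[m.+1]addn1 PoszD.
by rewrite IH.
Qed.

Lemma straight_self_avoiding (N : nat) : SAW1 N (zero_conf N).
Proof.
apply/self_avoidingP; rewrite /self_avoiding size_nseq eqxx /walk /zero_conf.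
rewrite map_nseq (scanl_straight 0) -[_ :: _]/(map _ (iota 0 N.+1)).
by rewrite map_inj_uniq ?iota_uniq // => i j [].
Qed.

Lemma size_pivot k C : size (pivot k C) = size C.
Proof. by rewrite /pivot; case: ifP => // _; rewrite size_map size_iota. Qed.

Lemma pivot0 C : pivot 0 C = C.
Proof. by rewrite /pivot eqxx. Qed.

Lemma nth_pivot k C j : k != 0 -> (j < size C)%N ->
  nth 0 (pivot k C) j =
  if (j.+1 < `|k|)%N then nth 0 C j else fpow_sign k (nth 0 C j).
Proof.
move=> k0 ltjC; rewrite /pivot (negbTE k0).
by rewrite (nth_map 0%N) ?size_iota // nth_iota.
Qed.

Lemma fpow_signK (k : int) (x : 'Z_4) :
  k != 0 -> fpow_sign (- k) (fpow_sign k x) = x.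
Proof.
rewrite /fpow_sign oppr_gt0 => k0.
case: (ltrgtP k 0) => [_|_|k_eq0]; [exact: subrK | exact: addrK |].
by rewrite k_eq0 eqxx in k0.
Qed.

Lemma pivotK k C : k != 0 -> pivot (- k) (pivot k C) = C.
Proof.
move=> k0; apply: (@eq_from_nth _ 0); rewrite !size_pivot // => j ltjC.
rewrite nth_pivot ?oppr_eq0 ?size_pivot // nth_pivot // abszN.
by case: (j.+1 < `|k|)%N => //; rewrite fpow_signK.
Qed.

Lemma apply_pivots_rcons ks k C :
  apply_pivots (rcons ks k) C = pivot k (apply_pivots ks C).
Proof. by rewrite /apply_pivots foldl_rcons. Qed.

(* Rigid rotation by a quarter turn: every direction is shifted by 1. *)
Definition rotate (C : conformation) : conformation := [seq d + 1 | d <- C].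

Lemma pivot1E C : pivot 1 C = rotate C.
Proof.
rewrite /pivot /rotate /= -[C in RHS](mkseq_nth 0) /mkseq -map_comp.
by apply: eq_map => j; rewrite /fpow_sign ltr01.
Qed.

Lemma pivot_rotate k C : pivot k (rotate C) = rotate (pivot k C).
Proof.
have [->|k0] := eqVneq k 0; first by rewrite !pivot0.
apply: (@eq_from_nth _ 0); rewrite ?size_map ?size_pivot ?size_map // => j ltjC.
rewrite nth_pivot ?size_map // !(nth_map 0) ?size_pivot // nth_pivot //.
by case: (j.+1 < `|k|)%N => //; rewrite /fpow_sign; case: ifP; rewrite addrAC.
Qed.

Lemma rotate4 C : iter 4 rotate C = C.
Proof.
have four : 1 + (1 + (1 + 1)) = 0 :> 'Z_4 by apply: val_inj.
by rewrite /= /rotate -!map_comp map_id_in // => d _ /=; rewrite -!addrA four addr0.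
Qed.

Lemma pivotN1E C : pivot (-1) C = iter 3 rotate C.
Proof. by rewrite -{1}[C]rotate4 [iter 4 _ _]/= -pivot1E pivotK. Qed.

Definition rot90 (p : int * int) : int * int := (p.2, - p.1).

Lemma rot90_inj : injective rot90.
Proof.
by apply: (can_inj (g := fun p => (- p.2, p.1))) => -[x y] /=; rewrite opprK.
Qed.

Lemma step_rotate (d : 'Z_4) : step (d + 1) = rot90 (step d).
Proof. by case: d => -[|[|[|[|n]]]]. Qed.

Lemma walk_rotate C : walk (rotate C) = map rot90 (walk C).
Proof.
have rot90D p q : rot90 (addp p q) = addp (rot90 p) (rot90 q).
  by rewrite /rot90 /addp /= opprD.
rewrite /walk /rotate -map_comp (eq_map step_rotate) map_comp /=.
congr (_ :: _); rewrite -[(0, 0) in LHS]/(rot90 (0, 0)).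
by elim: (map step C) (0, 0) => //= q s IH p; rewrite -rot90D IH.
Qed.

Lemma self_avoiding_rotate N C :
  self_avoiding N (rotate C) = self_avoiding N C.
Proof. by rewrite /self_avoiding walk_rotate size_map (map_inj_uniq rot90_inj). Qed.

Lemma constant_rotate C : constant (rotate C) = constant C.
Proof.
case: C => //= d C; rewrite all_map; apply: eq_all => e /=.
exact: (inj_eq (addIr 1)).
Qed.

(* C is rigid if every pivot move f_k with 2 <= |k| <= N creates a crossing;
   the only legal self-avoiding moves from C are then the rigid rotations. *)
Definition rigid (N : nat) (C : conformation) : Prop :=
  forall k, valid_index N k -> (2 <= `|k|)%N -> ~ SAW1 N (pivot k C).

(* Rigidity survives a rotation, since pivots commute with rotations and
   rotations preserve self-avoidance. *)
Lemma rigid_rotate N C : rigid N C -> rigid N (rotate C).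
Proof.
move=> rigidC k vk hk /self_avoidingP.
by rewrite pivot_rotate self_avoiding_rotate => /self_avoidingP; apply: rigidC.
Qed.

Definition rotation_orbit (C D : conformation) : Prop :=
  exists i, D = iter i rotate C.

Lemma rotation_orbit_pivot C D : rotation_orbit C D ->
  rotation_orbit C (pivot 1 D) /\ rotation_orbit C (pivot (-1) D).
Proof.
case=> i ->; split; first by exists i.+1; rewrite pivot1E.
by exists (3 + i)%N; rewrite pivotN1E iterD.
Qed.

Lemma rigid_orbit N C D : rigid N C -> rotation_orbit C D -> rigid N D.
Proof. by move=> rigidC [i ->]; elim: i => //= i; apply: rigid_rotate. Qed.

(* Rotations preserve non-constancy, so the orbit of a non-constant
   conformation misses the straight conformation. *)
Lemma rotation_orbit_straight N C :
  ~~ constant C -> ~ rotation_orbit C (zero_conf N).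
Proof.
move=> ncC [i /(congr1 constant)]; rewrite constant_nseq.
by elim: i => [|i IH] /=; rewrite ?constant_rotate // => /esym; apply/negP.
Qed.

Section RigidFamily.
Variables (N : nat) (S : conformation -> Prop).
Hypothesis S_rigid : forall D, S D -> rigid N D.
Hypothesis S_pivot1 : forall D, S D -> S (pivot 1 D) /\ S (pivot (-1) D).

(* A self-avoiding conformation can enter S by a single pivot move only if it
   already belongs to S: long-range moves out of S are never self-avoiding,
   and f_1, f_{-1} are mutually inverse and keep S stable. *)
Lemma pivot_into_family D k :
  valid_index N k -> SAW1 N D -> S (pivot k D) -> S D.
Proof.
move=> vk sawD SE; have [k0|k0] := eqVneq k 0; first by rewrite k0 pivot0 in SE.
have back : pivot (- k) (pivot k D) = D by exact: pivotK.
have [ltk|lek] := ltnP 1 `|k|.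
  by case: (S_rigid SE (k := - k)); rewrite ?back // /valid_index abszN.
have [k1|k1] : k = 1 \/ k = -1 by lia.
  by subst k; rewrite -back; case: (S_pivot1 SE).
by subst k; rewrite -back opprK; case: (S_pivot1 SE).
Qed.

Lemma family_not_SAW3 c : S c -> ~ S (zero_conf N) -> ~ SAW3 N c.
Proof.
move=> Sc Sz [_ [ks [vks [c_def inter]]]]; apply: Sz.
suff reach j : (j <= size ks)%N ->
    S (apply_pivots (take j ks) (zero_conf N)) -> S (zero_conf N).
  by apply: (reach (size ks)); rewrite // take_size -c_def.
elim: j => [|j IH] ltjks; first by rewrite take0.
rewrite (take_nth 0 ltjks) apply_pivots_rcons => S_next.
apply: IH (ltnW ltjks) (pivot_into_family _ _ S_next).
  exact: (all_nthP 0 vks).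
case: j ltjks {S_next} => [|j] ltjks.
  by rewrite take0; apply: straight_self_avoiding.
by apply: inter; rewrite /= ltnW.
Qed.

End RigidFamily.

Definition long_pivots (N : nat) : seq int :=
  [seq Posz i | i <- iota 2 N.-1] ++ [seq Negz i | i <- iota 1 N.-1].

Lemma mem_long_pivots N k :
  valid_index N k -> (2 <= `|k|)%N -> k \in long_pivots N.
Proof.
rewrite /valid_index /long_pivots mem_cat; case: k => n /= vn ln.
  by apply/orP; left; apply: map_f; rewrite mem_iota; lia.
by apply/orP; right; apply: map_f; rewrite mem_iota; lia.
Qed.

Lemma rigid_check N C :
  all (fun k => ~~ self_avoiding N (pivot k C)) (long_pivots N) -> rigid N C.
Proof.
move=> /allP rigidC k vk lk /self_avoidingP sawC.
by have := rigidC k (mem_long_pivots vk lk); rewrite sawC.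
Qed.

Definition witness_directions : seq nat := [::
  2; 3; 3; 3; 3; 2; 3; 2; 3; 2; 3; 3; 2; 1; 2; 2; 3; 0; 3; 3; 2; 2; 2; 1; 0;
  1; 2; 2; 3; 3; 2; 1; 1; 2; 2; 1; 1; 2; 1; 1; 1; 0; 1; 1; 0; 1; 1; 0; 1; 0;
  1; 0; 0; 1; 0; 1; 0; 0; 0; 0; 1; 0; 1; 0; 1; 0; 1; 1; 2; 2; 2; 3; 2; 2; 2;
  2; 3; 2; 2; 3; 0; 3; 2; 2; 3; 0; 3; 2; 2; 3; 2; 3; 2; 2; 2; 3; 0; 0; 3; 2;
  3; 2; 3; 3; 3; 3; 3; 3; 3; 0; 3; 0; 3; 0; 3; 0; 0; 0; 0; 0; 0; 0; 1; 0; 1;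
  0; 0; 1; 2; 1; 0; 1; 0; 1; 0; 1; 0; 1; 2; 1; 0; 0; 1; 0; 0; 1; 2; 1; 0; 0;
  1; 1; 2; 1; 2; 2; 3; 3; 2; 2; 3; 2; 2; 3; 2; 3; 2; 3; 0; 0; 3; 2; 2; 2; 2;
  1; 1; 1; 1; 1; 1; 2; 3; 3; 2; 2; 3; 0; 3; 3; 2; 1; 2; 3; 2; 2; 3; 3; 2; 3;
  0; 3; 3; 0; 1; 0; 1; 0; 0; 0; 0; 0; 0; 1; 2]%N.

Definition witness_pivots : seq int := map Posz [::
  1; 1; 2; 6; 6; 6; 7; 8; 8; 8; 9; 10; 10; 10; 11; 13; 13; 13; 14; 14; 14;
  15; 17; 18; 19; 19; 19; 21; 21; 21; 24; 24; 24; 25; 25; 25; 26; 27; 29;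
  31; 31; 31; 32; 32; 32; 34; 36; 36; 36; 38; 39; 39; 39; 42; 42; 42; 43;
  45; 45; 45; 46; 48; 48; 48; 49; 50; 50; 50; 51; 52; 52; 52; 54; 55; 55;
  55; 56; 57; 57; 57; 61; 62; 62; 62; 63; 64; 64; 64; 65; 66; 66; 66; 67;
  69; 72; 73; 73; 73; 77; 78; 78; 78; 80; 81; 82; 82; 82; 83; 83; 83; 85;
  86; 87; 87; 87; 88; 88; 88; 90; 91; 91; 91; 92; 93; 93; 93; 96; 97; 99;
  99; 99; 100; 100; 100; 101; 102; 102; 102; 103; 110; 111; 111; 111; 112;
  113; 113; 113; 114; 115; 115; 115; 116; 123; 124; 124; 124; 125; 126; 126;
  126; 128; 129; 130; 130; 130; 131; 131; 131; 132; 133; 133; 133; 134; 135;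
  135; 135; 136; 137; 137; 137; 138; 139; 140; 140; 140; 141; 141; 141; 143;
  144; 144; 144; 146; 147; 148; 148; 148; 149; 149; 149; 151; 153; 154; 154;
  154; 155; 157; 159; 159; 159; 161; 162; 162; 162; 164; 165; 165; 165; 166;
  167; 167; 167; 168; 169; 171; 171; 171; 172; 172; 172; 176; 176; 176; 182;
  183; 185; 185; 185; 187; 188; 189; 189; 189; 191; 191; 191; 192; 192; 192;
  193; 194; 195; 195; 195; 197; 199; 199; 199; 200; 201; 202; 202; 202; 204;
  205; 206; 206; 206; 207; 208; 208; 208; 214; 215]%N.

Definition witness : conformation := [seq inZp d | d <- witness_directions].

Lemma witness_SAW2 : SAW2 215 witness.
Proof.
split; first by apply/self_avoidingP; vm_compute.
by exists witness_pivots; split; [vm_compute | apply/eqP; vm_compute].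
Qed.

Lemma witness_rigid : rigid 215 witness.
Proof. by apply: rigid_check; vm_compute. Qed.

Lemma witness_nonconstant : ~~ constant witness.
Proof. by vm_compute. Qed.

Theorem mainTheorem2 :
  exists N : nat, (1 <= N)%N /\ exists c : conformation, SAW2 N c /\ ~ SAW3 N c.
Proof.
exists 215; split => //; exists witness; split; first exact: witness_SAW2.
apply: (@family_not_SAW3 215 (rotation_orbit witness)).
- by move=> D; apply: rigid_orbit witness_rigid.
- exact: rotation_orbit_pivot.
- by exists 0%N.
- exact: rotation_orbit_straight witness_nonconstant.
Qed.
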